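(* Let $M$ be a regular indecomposable module which is a sink module with radius $r$. Then $r\ge 1$ and there is an integer $i$ with $1\le i\le r$ such that $\sigma^iM$ is a flow module or a source module.
   Context: Let $k$ be a field and $n\ge 3$. $T(n)$ is the $n$-regular tree; fix a bipartite orientation $\Omega$ (every vertex a sink or a source), $\sigma\Omega$ the opposite orientation. A module is a finite-dimensional $k$-representation of $(T(n),\Omega)$ or $(T(n),\sigma\Omega)$. The shift functor $\sigma$ is the composition of the Bernstein–Gelfand–Ponomarev reflection functors at all sinks, sending representations of $(T(n),\Omega)$ to those of $(T(n),\sigma\Omega)$ and vice versa. An indecomposable module $M$ is regular if $\sigma^tM\neq 0$ for all $t\in\mathbb Z$ ($\sigma^t$ for $t<0$ being powers of the left adjoint $\sigma^-$). For indecomposable $M$, $T(M)$ is the full subgraph of $T(n)$ on vertices $a$ with $M_a\neq0$; a diameter path is a path (sequence of vertices, consecutive ones neighbours, no immediate backtracking) in $T(M)$ of maximal length $d(M)$; $r(M)=\lfloor d(M)/2\rfloor$. $M$ is a sink (resp. source) module if its diameter paths start and end at sinks (resp. sources) of the orientation of its quiver, and a flow module if $d(M)$ is odd. *)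

From HB Require Import structures.
From mathcomp Require Import all_boot all_order all_algebra.
Set Implicit Arguments. Unset Strict Implicit. Unset Printing Implicit Defensive.
Import GRing.Theory.
Local Open Scope ring_scope.

(* The n-regular tree T(n): vertices are reduced words in n letters (no   *)
(* two consecutive equal letters), i.e. elements of the free product of n *)
(* copies of Z/2 (Cayley graph).  A word is stored REVERSED: the head of  *)
(* the list is the last letter.  The j-th neighbour of w is w * s_j.      *)
Section Tree.
Variable n : nat.

Definition reduced (w : seq 'I_n) : bool := sorted (fun x y => x != y) w.

Definition vertex := {w : seq 'I_n | reduced w}.

Definition nbs (w : seq 'I_n) (j : 'I_n) : seq 'I_n :=
  if w is j' :: w' then (if j' == j then w' else j :: w) else [:: j].

Lemma nbs_reduced (w : seq 'I_n) (j : 'I_n) : reduced w -> reduced (nbs w j).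
Proof.
case: w => [|j' w'] //= H.
case: eqP => [_|ne].
  by move: H; rewrite /reduced /=; apply: path_sorted.
rewrite /reduced /= H andbT; apply/eqP => E; apply: ne; by rewrite E.
Qed.

Definition nb (v : vertex) (j : 'I_n) : vertex :=
  exist _ (nbs (val v) j) (nbs_reduced j (valP v)).

Definition root : vertex := exist _ [::] isT.

Definition adj (u v : vertex) : bool := [exists j, nb u j == v].

Fixpoint nobt (s : seq vertex) : bool :=
  match s with
  | x :: ((y :: z :: _) as t) => (x != z) && nobt t
  | _ => true
  end.

End Tree.

(* Representations of (T(n), orientation).  The orientation is bipartite: *)
(* with orient = p, the sinks are the vertices v with odd |v| == p, all    *)
(* others are sources.  p = false is the fixed orientation Omega, p = true *)
(* is sigma Omega.  The space at v is F^(dim v) (row vectors); for a       *)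
(* SOURCE u, amap u j : 'M_(dim u, dim (nb u j)) is the linear map along   *)
(* the arrow u -> nb u j  (x |-> x *m amap u j).  The values of amap at    *)
(* sinks are irrelevant and are ignored by every definition below.         *)
Record rep (F : fieldType) (n : nat) := Rep {
  orient : bool;
  dim : vertex n -> nat;
  amap : forall (u : vertex n) (j : 'I_n), 'M[F]_(dim u, dim (nb u j))
}.

Section Reps.
Variables (F : fieldType) (n : nat).
Implicit Types (M : rep F n) (u v : vertex n).

Definition sinkb M v : bool := odd (size (val v)) == orient M.

Definition nonzero M : Prop := exists v, (0 < dim M v)%N.

Definition fin_dim M : Prop :=
  exists s : seq (vertex n), forall v, v \notin s -> dim M v = 0%N.

(* the map  (+)_j M_(nb a j) --> M_a  at a sink a (column block matrix) *)
Definition in_mx M (a : vertex n) : 'M[F]_(\sum_(j < n) dim M (nb a j), dim M a) :=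
  @mxcol F n (fun j => dim M (nb a j)) (dim M a)
    (fun j => conform_mx (0 : 'M_(dim M (nb a j), dim M a)) (amap M (nb a j) j)).

Definition out_mx M (b : vertex n) : 'M[F]_(dim M b, \sum_(j < n) dim M (nb b j)) :=
  @mxrow F n (fun j => dim M (nb b j)) (dim M b) (fun j => amap M b j).




Arguments in_mx : clear implicits.
Arguments out_mx : clear implicits.

Definition sigma_dim M (v : vertex n) : nat :=
  if sinkb M v then \rank (kermx (in_mx M v)) else dim M v.

Definition sigma M : rep F n :=
  @Rep F n (~~ orient M) (sigma_dim M)
    (fun u j =>
       if sinkb M u then
         conform_mx (0 : 'M_(sigma_dim M u, sigma_dim M (nb u j)))
           (@submxrow F n (fun i => dim M (nb u i)) _
              (row_base (kermx (in_mx M u))) j)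
       else 0).

(* quotient map (+)_j M_(nb b j) -> coker (out_mx b), with target of        *)
(* dimension = rank; its left kernel is exactly the image of out_mx b.      *)
Definition coker_proj M (b : vertex n) :
  'M[F]_(\sum_(j < n) dim M (nb b j), \rank (cokermx (out_mx M b))^T) :=
  (row_base (cokermx (out_mx M b))^T)^T.



Arguments coker_proj : clear implicits.

Definition sigmam_dim M (v : vertex n) : nat :=
  if ~~ sinkb M v then \rank (cokermx (out_mx M v))^T else dim M v.

Definition sigmam M : rep F n :=
  @Rep F n (~~ orient M) (sigmam_dim M)
    (fun a j =>
       if sinkb M a then
         conform_mx (0 : 'M_(sigmam_dim M a, sigmam_dim M (nb a j)))
           (@submxcol F n (fun i => dim M (nb (nb a j) i)) _
              (coker_proj M (nb a j)) j)
       else 0).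

Definition decomposition M (U W : forall v, 'M[F]_(dim M v)) : Prop :=
  (forall v, (U v + W v == 1%:M)%MS /\ (U v :&: W v <= (0 : 'M_(dim M v)))%MS) /\
  (forall u j, ~~ sinkb M u ->
     (U u *m amap M u j <= U (nb u j))%MS /\ (W u *m amap M u j <= W (nb u j))%MS).

Arguments decomposition : clear implicits.


Definition indecomposable M : Prop :=
  nonzero M /\
  forall U W, decomposition M U W -> (forall v, U v = 0) \/ (forall v, W v = 0).

(* regular: sigma^t M <> 0 for all t in Z *)
Definition regular M : Prop :=
  forall t : nat, nonzero (iter t sigma M) /\ nonzero (iter t sigmam M).

Definition supp M (v : vertex n) : bool := (0 < dim M v)%N.

(* a path in T(M): nonempty, consecutive vertices neighbours, inside the
   support, no immediate backtracking; its length is (size s).-1 *)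
Definition tpath M (s : seq (vertex n)) : bool :=
  if s is x :: s' then [&& path (@adj n) x s', all (supp M) s & nobt s]
  else false.

Definition diam_path M (s : seq (vertex n)) : Prop :=
  tpath M s /\ forall t, tpath M t -> (size t <= size s)%N.

Definition sink_module M : Prop :=
  (exists s, diam_path M s) /\
  forall s, diam_path M s ->
    sinkb M (head (root n) s) /\ sinkb M (last (root n) s).

Definition source_module M : Prop :=
  (exists s, diam_path M s) /\
  forall s, diam_path M s ->
    ~~ sinkb M (head (root n) s) /\ ~~ sinkb M (last (root n) s).

Definition flow_module M : Prop :=
  exists s, diam_path M s /\ odd (size s).-1.

End Reps.

From Pilot Require Import Defs.
From HB Require Import structures.
From mathcomp Require Import all_boot all_order all_algebra.
From mathcomp Require Import zify.
From Stdlib Require Import Classical.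
(* Re-imported so that [dim] denotes the dimension vector of a [rep], not [vector.dim]. *)
Import Defs.
Set Implicit Arguments. Unset Strict Implicit. Unset Printing Implicit Defensive.
Import GRing.Theory.

(* The shift sigma reflects at every sink, so it leaves the spaces at the
   sources unchanged.  Suppose sigma M is neither a flow nor a source module.
   Then it has a diameter path of even length whose ends are sinks of
   sigma M, i.e. sources of M.  The support of an indecomposable module is
   connected, so the interior sinks of that path also lie in T(M), and the
   path is a path of T(M).  It is strictly shorter than d(M): otherwise
   extend it at one end by a vertex c outside T(M); c is a sink of M, and
   the reflection at an empty sink is the whole sum of the neighbouring
   spaces, so c is in T(sigma M), contradicting maximality in sigma M.
   Hence d(sigma M) <= d(M) - 2.  Regularity makes every reflection
   surjective, so indecomposability passes to all sigma^i M and we may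
   iterate.  Each diameter met along the way is even and at least 2, since
   a module of diameter 0 sitting at a sink is killed by sigma; as
   d(M) = 2r, this cannot go on for r steps. *)

Section Tree.
Variable n : nat.
Implicit Types (u v w x y : vertex n) (j : 'I_n) (s : seq (vertex n)).

Lemma nbsK (w : seq 'I_n) j : reduced w -> nbs (nbs w j) j = w.
Proof.
case: w => [|j' w'] /=; first by rewrite eqxx.
case: eqP => [->|ne] /= H; last by rewrite eqxx.
case: w' H => [|k w''] //= /andP[H _]; rewrite eq_sym (negbTE H) //.
Qed.

Lemma nbK v j : nb (nb v j) j = v.
Proof. by apply: val_inj; rewrite /= nbsK // (valP v). Qed.

Lemma nb_inj v : injective (nb v).
Proof.
move=> j1 j2 /(congr1 val) /=; case: (val v) => [|k w] /=; first by case.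
case: (eqVneq k j1) => [<-|ne1]; case: (eqVneq k j2) => [<-|ne2] //.
- move=> E; have: size w = size (j2 :: k :: w) by rewrite -E.
  rewrite /=; lia.
- move=> E; have: size (j1 :: k :: w) = size w by rewrite E.
  rewrite /=; lia.
- by case.
Qed.

Lemma nb_pushP v j :
  val (nb v j) = j :: val v \/
  size (val v) = (size (val (nb v j))).+1 /\ ohead (val v) = Some j.
Proof.
rewrite /=; case: (val v) => [|k w] /=; first by left.
by case: eqP => [->|_]; [right|left].
Qed.

Lemma size_nb v j :
  size (val (nb v j)) = (size (val v)).+1 \/ size (val v) = (size (val (nb v j))).+1.
Proof. by case: (nb_pushP v j) => [->|[-> _]]; [left|right]. Qed.

Lemma nb_neq v j : nb v j != v.
Proof.
by apply/eqP => /(congr1 (fun w => size (val w))) E; case: (size_nb v j); rewrite E; lia.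
Qed.

Lemma sinkb_nb (F : fieldType) (X : rep F n) v j : sinkb X (nb v j) = ~~ sinkb X v.
Proof.
rewrite /sinkb; have -> : odd (size (val (nb v j))) = ~~ odd (size (val v)).
  by case: (size_nb v j) => ->; rewrite /= ?negbK.
by case: (odd _); case: (orient X).
Qed.

Lemma adjP u v : reflect (exists j, v = nb u j) (adj u v).
Proof. by apply: (iffP existsP) => [[j /eqP <-]|[j ->]]; exists j. Qed.

Lemma adj_nb u j : adj u (nb u j).
Proof. by apply/adjP; exists j. Qed.

Lemma nobt_behead x s : nobt (x :: s) -> nobt s.
Proof. by case: s => // y [|z s] //= /andP[]. Qed.

Lemma nobt_cons x y s : nobt (y :: s) -> x != head y s -> nobt [:: x, y & s].
Proof. by case: s => // z s /= -> ->. Qed.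

(* Once a walk without backtracking moves away from the root it keeps doing so. *)
Lemma nobt_push_size x y s : path (@adj n) x (y :: s) -> nobt [:: x, y & s] ->
  (exists j, val y = j :: val x) ->
  size (val (last x (y :: s))) = size (val x) + (size s).+1.
Proof.
elim: s x y => [|z s IH] x y /= /andP[axy ps] nb1 [j hj]; first by rewrite hj /= addn1.
move: nb1 ps => /andP[xz nb2] /andP[/adjP[k ez] ps]; subst z.
have {IH} := IH y (nb y k); rewrite /= ps adj_nb => /(_ isT nb2).
case: (nb_pushP y k) => [hk|[_ hk]].
  by move=> /(_ (ex_intro _ k hk)) ->; rewrite hj /=; lia.
exfalso; move: xz hk; rewrite -[\val y]/(sval y) hj /= => xz [hk].
have E : nb y k = x by apply: val_inj; rewrite /= -[\val y]/(sval y) hj hk /= eqxx.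
by move: xz; rewrite E eqxx.
Qed.

Lemma nobt_path_size x s : path (@adj n) x s -> nobt (x :: s) ->
  size s <= size (val x) + size (val (last x s)).
Proof.
elim: s x => [|y s IH] x //= /andP[axy ps] nb1.
move/adjP: (axy) => [j ey].
case: (nb_pushP x j) => [hp|[hs _]].
  rewrite (@nobt_push_size x y s) /= ?axy ?ps //; last by exists j; rewrite ey.
  lia.
have := IH y ps (nobt_behead (x := x) (s := y :: s) nb1).
by rewrite -ey in hs; move: hs; cbn; lia.
Qed.

Lemma sinkb_last (F : fieldType) (X : rep F n) x s : path (@adj n) x s ->
  sinkb X (last x s) = sinkb X x (+) odd (size s).
Proof.
elim: s x => [|y s IH] x /=; first by rewrite addbF.
move=> /andP[/adjP[j ->] ps]; rewrite (IH _ ps) sinkb_nb.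
by case: (sinkb X x); case: (odd _).
Qed.

End Tree.

Local Open Scope ring_scope.

Section Reflection.
Variables (F : fieldType) (n : nat).
Implicit Types (X : rep F n) (u v a b : vertex n) (j : 'I_n).

Lemma submx_empty m k p (A : 'M[F]_(m, k)) (B : 'M[F]_(p, k)) :
  (m = 0%N \/ k = 0%N) -> (A <= B)%MS.
Proof.
move=> h; have /eqP-> : A == 0; last exact: sub0mx.
rewrite -mxrank_eq0 -leqn0; case: h => <-; [exact: rank_leq_row | exact: rank_leq_col].
Qed.

Lemma scalar_mx1_eq0 m : (1%:M : 'M[F]_m) = 0 -> m = 0%N.
Proof. by move=> h; have := mxrank1 F m; rewrite h mxrank0. Qed.

Lemma submx_mxcol p (p_ : 'I_p -> nat) k (B_ : forall i, 'M[F]_(p_ i, k)) i :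
  (B_ i <= \mxcol_i B_ i)%MS.
Proof. by rewrite -{1}(mxcolK B_ i) /submxcol rowsubE submxMl. Qed.

Lemma amap_sub_in_mx X u j : (amap X u j <= in_mx X (nb u j))%MS.
Proof.
have conf u' (e : u' = u) :
    (amap X u j <= conform_mx (0 : 'M_(dim X u', dim X (nb u j))) (amap X u' j))%MS.
  by subst u'; rewrite conform_mx_id submx_refl.
apply: submx_trans (conf _ (nbK u j)) _.
exact: (submx_mxcol (fun i => conform_mx (0 : 'M_(dim X (nb (nb u j) i), dim X (nb u j)))
                                        (amap X (nb (nb u j) i) i)) j).
Qed.

Lemma sinkb_sigma X v : sinkb (sigma X) v = ~~ sinkb X v.
Proof. by rewrite /sinkb /=; case: (odd _); case: (orient X). Qed.

Lemma dim_sigma_source X v : ~~ sinkb X v -> dim (sigma X) v = dim X v.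
Proof. by move=> h; rewrite /= /sigma_dim (negbTE h). Qed.

Lemma dim_sigma_sink X a : sinkb X a -> dim (sigma X) a = \rank (kermx (in_mx X a)).
Proof. by move=> h; rewrite /= /sigma_dim h. Qed.

Lemma dim_sigma_sink_le X a : sinkb X a ->
  (dim (sigma X) a <= \sum_(j < n) dim X (nb a j))%N.
Proof. by move=> h; rewrite dim_sigma_sink // mxrank_ker leq_subr. Qed.

Lemma dim_sigma_sink_ge X a : sinkb X a ->
  ((\sum_(j < n) dim X (nb a j)) - dim X a <= dim (sigma X) a)%N.
Proof. by move=> h; rewrite dim_sigma_sink // mxrank_ker leq_sub2l // rank_leq_col. Qed.

Lemma dim_sigma_eq0 X : (forall v, ~~ sinkb X v -> dim X v = 0%N) ->
  forall v, dim (sigma X) v = 0%N.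
Proof.
move=> h v; case: (boolP (sinkb X v)) => hv; last by rewrite dim_sigma_source // h.
apply/eqP; rewrite -leqn0; apply: leq_trans (dim_sigma_sink_le hv) _.
rewrite leqn0 sum_nat_eq0; apply/forallP => j; apply/implyP => _.
by rewrite h // sinkb_nb hv.
Qed.

(* The restrictions of X to [P] and to its complement form a decomposition. *)
Lemma indecomposable_split_supp X (P : pred (vertex n)) : indecomposable X ->
  (forall u j, ~~ sinkb X u -> P u != P (nb u j) ->
     dim X u = 0%N \/ dim X (nb u j) = 0%N) ->
  (forall v, P v -> dim X v = 0%N) \/ (forall v, ~~ P v -> dim X v = 0%N).
Proof.
move=> [_ hind] hP.
pose U v := if P v then (1%:M : 'M[F]_(dim X v)) else 0.
pose W v := if P v then 0 else (1%:M : 'M[F]_(dim X v)).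
have hd : decomposition U W.
  split.
    move=> v; rewrite /U /W; case: (P v).
      split; last by rewrite capmx0 submx_refl.
      by rewrite addsmx0_id; apply/andP; split; apply: submx_refl.
    split; last by rewrite cap0mx submx_refl.
    by rewrite adds0mx_id; apply/andP; split; apply: submx_refl.
  move=> u j hu; rewrite /U /W.
  case: (eqVneq (P u) (P (nb u j))) => [E|ne].
    by rewrite E; case: (P (nb u j)); split; rewrite ?mul0mx ?sub0mx ?submx1.
  by have [h|h] := hP u j hu ne; split; apply: submx_empty; [left|left|right|right].
case: (hind U W hd) => h; [left|right] => v hv; apply: scalar_mx1_eq0; have := h v.
  by rewrite /U /= hv.
by rewrite /W /= (negbTE hv).
Qed.

(* Otherwise the cokernel of [in_mx X a] splits off as a simple summand at the
   sink [a], which sigma kills. *)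
Lemma in_mx_row_full X : indecomposable X -> nonzero (sigma X) ->
  forall a, sinkb X a -> row_full (in_mx X a).
Proof.
move=> hX hs.
pose U v := if sinkb X v then (in_mx X v)^C%MS else (0 : 'M[F]_(dim X v)).
pose W v := if sinkb X v then <<in_mx X v>>%MS else (1%:M : 'M[F]_(dim X v)).
have hd : decomposition U W.
  split.
    move=> v; rewrite /U /W; case: (sinkb X v).
      split.
        apply/andP; split; first exact: submx1.
        rewrite sub1mx addsmxC.
        have E := adds_eqmx (genmxE (in_mx X v)) (eqmx_refl (in_mx X v)^C%MS).
        by rewrite /row_full E -/(row_full _) addsmx_compl_full.
      rewrite capmxC.
      have E := cap_eqmx (genmxE (in_mx X v)) (eqmx_refl (in_mx X v)^C%MS).
      by rewrite E capmx_compl submx_refl.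
    split; last by rewrite cap0mx submx_refl.
    by rewrite adds0mx_id; apply/andP; split; apply: submx_refl.
  move=> u j hu; rewrite /U /W /= (negbTE hu) sinkb_nb hu /=.
  split; first by rewrite mul0mx sub0mx.
  by rewrite mul1mx genmxE amap_sub_in_mx.
case: hX => _ hind.
case: (hind U W hd) => h.
  move=> a ha; have := h a; rewrite /U /= ha => /eqP.
  rewrite -mxrank_eq0 mxrank_compl subn_eq0 => le.
  by rewrite /row_full eqn_leq rank_leq_col.
exfalso; case: hs => v; rewrite dim_sigma_eq0 //.
by move=> w hw; apply: scalar_mx1_eq0; have := h w; rewrite /W /= (negbTE hw).
Qed.

End Reflection.

Section BlockMatrices.
Variables (F : fieldType) (p : nat) (p_ : 'I_p -> nat).
Local Notation sp := (\sum_i p_ i)%N.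

Lemma sub_mxdiagP k (x : 'M[F]_(k, sp)) (B : forall i, 'M[F]_(p_ i)) :
  (x <= \mxdiag_i B i)%MS <-> (forall i, (submxrow x i <= B i)%MS).
Proof.
split.
  case/submxP => y ->{x} i.
  by rewrite -(submxrowK y) mul_mxrow_mxdiag mxrowK submxMl.
move=> h; rewrite -(submxrowK x).
have -> : \mxrow_i submxrow x i = \mxrow_i (submxrow x i *m pinvmx (B i)) *m \mxdiag_i B i.
  by rewrite mul_mxrow_mxdiag; apply: eq_mxrow => i; rewrite mulmxKpV.
exact: submxMl.
Qed.

Lemma sub_mxdiag_mxcol d (B : forall i, 'M[F]_(p_ i)) (A_ : forall i, 'M[F]_(p_ i, d)) j :
  (B j *m A_ j <= \mxdiag_i B i *m \mxcol_i A_ i)%MS.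
Proof.
have -> : A_ j = submxcol (1%:M : 'M[F]_sp) j *m \mxcol_i A_ i.
  by rewrite submxcol_mul mul1mx mxcolK.
rewrite mulmxA submxMr //; apply/sub_mxdiagP => i.
rewrite -mul_submxrow -submxblockEv -(mxdiagZ (p_ := p_) 1) mxblockK.
case: eqVneq => [<-|_]; last by rewrite mulmx0 sub0mx.
by rewrite conform_mx_id mulmx1 submx_refl.
Qed.

Lemma mxdiag_direct (A B : forall i, 'M[F]_(p_ i)) :
  (forall i, (A i + B i == 1%:M)%MS /\ (A i :&: B i <= (0 : 'M_(p_ i)))%MS) ->
  ((\mxdiag_i A i) + (\mxdiag_i B i) == 1%:M)%MS /\
  ((\mxdiag_i A i) :&: (\mxdiag_i B i) <= (0 : 'M_sp))%MS.
Proof.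
move=> h.
have hcap : ((\mxdiag_i A i) :&: (\mxdiag_i B i) <= (0 : 'M_sp))%MS.
  set x := (_ :&: _)%MS.
  have hA : (x <= \mxdiag_i A i)%MS by exact: capmxSl.
  have hB : (x <= \mxdiag_i B i)%MS by exact: capmxSr.
  have -> : x = 0; last exact: submx_refl.
  rewrite -(submxrowK x) -(mxrow0 (q_ := p_)); apply: eq_mxrow => i.
  apply/eqP; rewrite -submx0; apply: submx_trans (proj2 (h i)).
  by rewrite sub_capmx (proj1 (sub_mxdiagP _ _) hA) (proj1 (sub_mxdiagP _ _) hB).
split => //; apply/andP; split; first exact: submx1.
rewrite sub1mx /row_full; apply/eqP.
have := mxrank_sum_cap (\mxdiag_i A i) (\mxdiag_i B i).
have -> : \rank (\mxdiag_i A i :&: \mxdiag_i B i)%MS = 0%N.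
  by apply/eqP; rewrite mxrank_eq0 -submx0.
rewrite addn0 !rank_mxdiag -big_split /= => ->.
apply: eq_bigr => i _.
have := mxrank_sum_cap (A i) (B i).
have -> : \rank (A i :&: B i)%MS = 0%N.
  by apply/eqP; rewrite mxrank_eq0 -submx0 (proj2 (h i)).
have -> : \rank (A i + B i)%MS = p_ i.
  by apply/eqP; rewrite -/(row_full _) -sub1mx; case/andP: (proj1 (h i)).
by rewrite addn0.
Qed.

(* Linear algebra of a reflection at a sink: [A] is the surjection from the sum
   of the neighbouring spaces, [RB] a basis of its kernel, and [Ua + Wa] a
   decomposition of the kernel compatible with the decompositions [CU i + CW i]
   of the neighbours; then the images of [CU] and [CW] under [A] are
   complementary. *)
Lemma reflection_direct d rho (A : 'M[F]_(sp, d)) (RB : 'M[F]_(rho, sp))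
  (CU CW : forall i, 'M[F]_(p_ i)) (Ua Wa : 'M[F]_rho) :
  row_full A -> (RB :=: kermx A)%MS ->
  (forall i, (CU i + CW i == 1%:M)%MS /\ (CU i :&: CW i <= (0 : 'M_(p_ i)))%MS) ->
  (Ua + Wa == 1%:M)%MS ->
  (forall i, (Ua *m submxrow RB i <= CU i)%MS) ->
  (forall i, (Wa *m submxrow RB i <= CW i)%MS) ->
  ((\mxdiag_i CU i) *m A + (\mxdiag_i CW i) *m A == 1%:M)%MS /\
  ((\mxdiag_i CU i) *m A :&: (\mxdiag_i CW i) *m A <= (0 : 'M_d))%MS.
Proof.
move=> hA hRK h hUW hU hW.
set DU := \mxdiag_i CU i; set DW := \mxdiag_i CW i.
have [hs hc] := mxdiag_direct h.
have hUa : (Ua *m RB <= DU)%MS by apply/sub_mxdiagP => i; rewrite -mul_submxrow.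
have hWa : (Wa *m RB <= DW)%MS by apply/sub_mxdiagP => i; rewrite -mul_submxrow.
split.
  apply/andP; split; first exact: submx1.
  apply: submx_trans (_ : (1%:M <= A)%MS) _; first by rewrite sub1mx.
  rewrite -addsmxMr -{1}[A]mul1mx submxMr //; by case/andP: hs.
set x := (_ :&: _)%MS.
have /submxP [P hP] : (x <= DU *m A)%MS by exact: capmxSl.
have /submxP [Q hQ] : (x <= DW *m A)%MS by exact: capmxSr.
have hk : (P *m DU - Q *m DW) *m A = 0 by rewrite mulmxBl -!mulmxA -hP -hQ subrr.
have /submxP [R hR] : (P *m DU - Q *m DW <= RB)%MS by rewrite hRK; apply/sub_kermxP.
have /sub_addsmxP [[r1 r2] /= hr] : (R <= Ua + Wa)%MS.
  by apply: submx_trans (submx1 R) _; case/andP: hUW.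
(* [P DU + (-r1) Ua RB = Q DW + r2 Wa RB] lies in [DU :&: DW], hence vanishes. *)
set z := P *m DU + (- r1) *m (Ua *m RB).
have hz1 : (z <= DU)%MS by rewrite addmx_sub // ?submxMl // (submx_trans (submxMl _ _) hUa).
have hz : z = Q *m DW + r2 *m (Wa *m RB).
  rewrite /z mulNmx !mulmxA -[P *m DU](subrK (Q *m DW)) hR hr mulmxDl.
  move: (r1 *m Ua *m RB) (r2 *m Wa *m RB) (Q *m DW) => a b c.
  by rewrite addrAC [a + b]addrC addrK addrC.
have hz2 : (z <= DW)%MS by rewrite hz addmx_sub // ?submxMl // (submx_trans (submxMl _ _) hWa).
have z0 : z = 0.
  by apply/eqP; rewrite -submx0; apply: submx_trans hc; rewrite sub_capmx hz1 hz2.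
have hRB : RB *m A = 0 by apply/sub_kermxP; rewrite hRK.
have -> : x = 0.
  rewrite hP mulmxA; move: z0; rewrite /z mulNmx => /eqP; rewrite addr_eq0 opprK => /eqP ->.
  by rewrite -!mulmxA hRB !mulmx0.
exact: submx_refl.
Qed.

Lemma row_free_mxdiag_eq0 rho (RB : 'M[F]_(rho, sp)) (CU : forall i, 'M[F]_(p_ i))
  (Ua : 'M[F]_rho) :
  row_free RB -> (forall i, CU i = 0) -> (forall i, (Ua *m submxrow RB i <= CU i)%MS) ->
  Ua = 0.
Proof.
move=> hf h0 hU.
have : (Ua *m RB <= \mxdiag_i CU i)%MS by apply/sub_mxdiagP => i; rewrite -mul_submxrow.
by rewrite (eq_mxdiag h0) mxdiag0 submx0 mulmx_free_eq0 // => /eqP.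
Qed.

End BlockMatrices.

Section Conform.
Variable F : fieldType.

Lemma conform_addsmx_eq1 m m' (e : m' = m) (A B : 'M[F]_m') :
  (A + B == 1%:M)%MS -> (conform_mx (0 : 'M_m) A + conform_mx (0 : 'M_m) B == 1%:M)%MS.
Proof. by subst m'; rewrite !conform_mx_id. Qed.

Lemma conform_capmx_sub0 m m' (e : m' = m) (A B : 'M[F]_m') :
  (A :&: B <= (0 : 'M_m'))%MS ->
  (conform_mx (0 : 'M_m) A :&: conform_mx (0 : 'M_m) B <= (0 : 'M_m))%MS.
Proof. by subst m'; rewrite !conform_mx_id. Qed.

Lemma conform_mx_eq0 m m' (e : m' = m) (A : 'M[F]_m') : conform_mx (0 : 'M_m) A = 0 -> A = 0.
Proof. by subst m'; rewrite !conform_mx_id. Qed.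

Lemma conform_mulmx_sub m m' k k' (e1 : m' = m) (e2 : k' = k)
  (A : 'M[F]_m') (B : 'M[F]_(m, k)) (C : 'M[F]_k') :
  (A *m conform_mx (0 : 'M_(m', k')) B <= C)%MS ->
  (conform_mx (0 : 'M_m) A *m B <= conform_mx (0 : 'M_k) C)%MS.
Proof. by subst m' k'; rewrite !conform_mx_id. Qed.

Lemma conform_mx00 m k m' k' : conform_mx (0 : 'M[F]_(m, k)) (0 : 'M[F]_(m', k')) = 0.
Proof.
rewrite /conform_mx; do 2!case: eqP => // *; apply/matrixP => i j; by rewrite castmxE !mxE.
Qed.

End Conform.

Section Pullback.
Variables (F : fieldType) (n : nat) (X : rep F n).
Implicit Types (u v a b : vertex n) (j : 'I_n).
Local Notation subspaces := (forall v, 'M[F]_(dim (sigma X) v)).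

Definition sigma_stable (Z : subspaces) : Prop :=
  forall u j, ~~ sinkb (sigma X) u -> (Z u *m amap (sigma X) u j <= Z (nb u j))%MS.

Definition cast_sigma (Z : subspaces) v : 'M[F]_(dim X v) := conform_mx 0 (Z v).

(* At a source the space of sigma X is that of X; at a sink take the image
   under [in_mx] of the subspaces at the neighbours. *)
Definition sigma_pullback (Z : subspaces) v : 'M[F]_(dim X v) :=
  if sinkb X v then <<(\mxdiag_j cast_sigma Z (nb v j)) *m in_mx X v>>%MS
  else cast_sigma Z v.

Lemma sigma_stable_sink Z a j : sigma_stable Z -> sinkb X a ->
  (conform_mx (0 : 'M_(\rank (kermx (in_mx X a)))) (Z a) *m
     submxrow (row_base (kermx (in_mx X a))) j <= cast_sigma Z (nb a j))%MS.
Proof.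
move=> hZ ha; have := hZ a j; rewrite sinkb_sigma ha => /(_ isT); rewrite /= ha.
by apply: conform_mulmx_sub; rewrite /sigma_dim ?sinkb_nb ha.
Qed.

Lemma sigma_pullback_stable Z u j : ~~ sinkb X u ->
  (sigma_pullback Z u *m amap X u j <= sigma_pullback Z (nb u j))%MS.
Proof.
move=> hu; rewrite /sigma_pullback (negbTE hu) sinkb_nb hu genmxE.
apply: submx_trans (sub_mxdiag_mxcol _ _ j).
by move: (nbK u j); move: (nb (nb u j) j) => u' e; subst u'; rewrite conform_mx_id.
Qed.

Lemma sigma_pullback_eq0 Z : sigma_stable Z ->
  (forall v, sigma_pullback Z v = 0) -> forall v, Z v = 0.
Proof.
move=> hZ h0 v.
have hC b : ~~ sinkb X b -> Z b = 0.
  move=> hb; apply: (conform_mx_eq0 (dim_sigma_source hb)).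
  by have := h0 b; rewrite /sigma_pullback (negbTE hb).
case: (boolP (sinkb X v)) => hv; last exact: hC.
apply: (conform_mx_eq0 (dim_sigma_sink hv)).
apply: (@row_free_mxdiag_eq0 F n (fun j => dim X (nb v j)) _ _ (fun i => cast_sigma Z (nb v i))).
- exact: row_base_free.
- by move=> i; rewrite /cast_sigma (hC (nb v i)) ?conform_mx00 // sinkb_nb hv.
- by move=> i; apply: sigma_stable_sink.
Qed.

Lemma sigma_pullback_direct U W :
  (forall a, sinkb X a -> row_full (in_mx X a)) -> decomposition U W ->
  forall v, (sigma_pullback U v + sigma_pullback W v == 1%:M)%MS /\
            (sigma_pullback U v :&: sigma_pullback W v <= (0 : 'M_(dim X v)))%MS.
Proof.
move=> hfull [hdec hmap].
have hsrc b : ~~ sinkb X b -> (cast_sigma U b + cast_sigma W b == 1%:M)%MS /\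
    (cast_sigma U b :&: cast_sigma W b <= (0 : 'M_(dim X b)))%MS.
  move=> hb; have e := dim_sigma_source hb; have [h1 h2] := hdec b.
  by split; [exact: (conform_addsmx_eq1 e) | exact: (conform_capmx_sub0 e)].
move=> v; rewrite /sigma_pullback; case: (boolP (sinkb X v)) => hv; last exact: hsrc.
rewrite !(adds_eqmx (genmxE _) (genmxE _)) (cap_eqmx (genmxE _) (genmxE _)).
apply: (@reflection_direct F n (fun j => dim X (nb v j)) (dim X v) _ (in_mx X v)
  (row_base (kermx (in_mx X v))) _ _
  (conform_mx (0 : 'M_(\rank (kermx (in_mx X v)))) (U v))
  (conform_mx (0 : 'M_(\rank (kermx (in_mx X v)))) (W v))).
- exact: hfull.
- exact: eq_row_base.
- by move=> i; apply: hsrc; rewrite sinkb_nb hv.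
- by have [h1 _] := hdec v; exact: (conform_addsmx_eq1 (dim_sigma_sink hv)).
- by move=> i; apply: sigma_stable_sink => // u j hu; case: (hmap u j hu).
- by move=> i; apply: sigma_stable_sink => // u j hu; case: (hmap u j hu).
Qed.

End Pullback.

Lemma sigma_indecomposable (F : fieldType) (n : nat) (X : rep F n) :
  indecomposable X -> nonzero (sigma X) ->
  (forall a, sinkb X a -> row_full (in_mx X a)) -> indecomposable (sigma X).
Proof.
move=> [_ hind] hnz hfull; split => // U W hUW.
have hUWX : decomposition (sigma_pullback U) (sigma_pullback W).
  by split; [exact: sigma_pullback_direct | move=> u j hu; split; apply: sigma_pullback_stable].
have [_ hmap] := hUW.
case: (hind _ _ hUWX) => h; [left|right]; apply: sigma_pullback_eq0 => // u j hu;
  by case: (hmap u j hu).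
Qed.

Local Close Scope ring_scope.

Section Connectivity.
Variables (F : fieldType) (n : nat).
Implicit Types (X : rep F n) (u v w c : vertex n) (j : 'I_n).

Fixpoint next_letter (p s : seq 'I_n) : option 'I_n :=
  match p, s with
  | [::], x :: _ => Some x
  | x :: p', y :: s' => if x == y then next_letter p' s' else None
  | _, _ => None
  end.

Lemma next_letter_rcons p s j : s != p -> rcons s j != p ->
  next_letter p (rcons s j) = next_letter p s.
Proof.
elim: p s => [|x p IH] [|y s] //=; first by case: (x == j); case: p IH.
move=> h1 h2; case: ifP => // /eqP E; subst y.
by apply: IH; [move: h1 | move: h2]; rewrite eqseq_cons eqxx.
Qed.

Lemma next_letter_push p j : next_letter p (rcons p j) = Some j.
Proof. by elim: p => [|x p IH] //=; rewrite eqxx. Qed.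

Lemma next_letter_pop q j : next_letter (rcons q j) q = None.
Proof. by elim: q => [|x q IH] //=; rewrite eqxx. Qed.

(* The components of T(n) minus c: [Some j] for the one through the child of c
   obtained by appending j, [None] for c itself and the one towards the root. *)
Definition branch c u := next_letter (rev (val c)) (rev (val u)).

Lemma val_nb_pop u j : ohead (val u) = Some j -> val u = j :: val (nb u j).
Proof. by rewrite /=; case: (val u) => [|k w] //= [->]; rewrite eqxx. Qed.

Lemma rev_val_neq u v : u != v -> rev (val u) != rev (val v).
Proof. by apply: contra => /eqP /(congr1 rev); rewrite !revK => /val_inj ->. Qed.

Lemma branch_nb c u j : u != c -> nb u j != c -> branch c (nb u j) = branch c u.
Proof.
move=> h1 h2; rewrite /branch.
case: (nb_pushP u j) => [hp|[_ hp]].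
  rewrite -[\val (nb u j)]/(sval (nb u j)) hp rev_cons next_letter_rcons //.
    exact: rev_val_neq.
  by move/rev_val_neq: h2; rewrite -[\val (nb u j)]/(sval (nb u j)) hp rev_cons.
have E := val_nb_pop hp.
rewrite -[\val u]/(sval u) E rev_cons next_letter_rcons //; first exact: rev_val_neq.
by rewrite -rev_cons -E; apply: rev_val_neq.
Qed.

Lemma branch_nb_center c j :
  branch c (nb c j) = Some j \/ ohead (val c) = Some j /\ branch c (nb c j) = None.
Proof.
rewrite /branch; case: (nb_pushP c j) => [hp|[_ hp]].
  by left; rewrite -[\val (nb c j)]/(sval (nb c j)) hp rev_cons next_letter_push.
right; split => //; have E := val_nb_pop hp.
by rewrite -[\val c]/(sval c) E rev_cons next_letter_pop.
Qed.

Lemma branch_nb_inj c j1 j2 : j1 != j2 -> branch c (nb c j1) != branch c (nb c j2).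
Proof.
move=> hj; apply/eqP.
case: (branch_nb_center c j1) => [->|[h1 ->]]; case: (branch_nb_center c j2) => [->|[h2 ->]] //.
- by case=> E; move: hj; rewrite E eqxx.
- by move: hj; rewrite h1 in h2; case: h2 => ->; rewrite eqxx.
Qed.

Lemma supp_connected X c j1 j2 : indecomposable X -> dim X c = 0 -> j1 != j2 ->
  dim X (nb c j1) = 0 \/ dim X (nb c j2) = 0.
Proof.
move=> hX hc hj.
pose P w := (w != c) && (branch c w == branch c (nb c j1)).
case: (@indecomposable_split_supp F n X P hX).
- move=> u j _ hne.
  case: (eqVneq u c) => [->|uc]; first by left.
  case: (eqVneq (nb u j) c) => [->|nc]; first by right.
  by move: hne; rewrite /P /= uc nc /= (branch_nb uc nc) eqxx.
- by move=> h; left; apply: h; rewrite /P nb_neq eqxx.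
- move=> h; right; apply: h; rewrite /P negb_and negbK; apply/orP; right.
  by rewrite eq_sym branch_nb_inj.
Qed.

Lemma supp_isolated X v : indecomposable X -> (0 < dim X v) ->
  (forall u j, (0 < dim X u) -> dim X (nb u j) = 0) ->
  forall w, w != v -> dim X w = 0.
Proof.
move=> hX hv hadj.
case: (@indecomposable_split_supp F n X (fun w => w == v) hX); last by [].
- move=> u j _; case: (eqVneq u v) => [->|uv] /=; first by move=> _; right; exact: hadj.
  case: (eqVneq (nb u j) v) => [E|] //= _; left.
  apply/eqP; rewrite -leqn0 leqNgt; apply/negP => /(hadj u j); rewrite E => h.
  by move: hv; rewrite h.
- by move=> h; move: hv; rewrite h.
Qed.

End Connectivity.

Lemma ex_maxn_prop (P : nat -> Prop) k0 N : P k0 -> (forall k, P k -> k <= N) ->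
  exists m, P m /\ forall k, P k -> k <= m.
Proof.
elim: N k0 => [|N IH] k0 hk0 hb.
  by exists k0; split => // k hk; have := hb _ hk; have := hb _ hk0; lia.
case: (classic (P N.+1)) => hN; first by exists N.+1.
apply: (IH k0 hk0) => k hk; have := hb _ hk.
by rewrite leq_eqVlt => /orP[/eqP E|//]; move: hk; rewrite E.
Qed.

Section Diameter.
Variables (F : fieldType) (n : nat).
Implicit Types (X Y : rep F n) (u v c h : vertex n) (j : 'I_n) (s t : seq (vertex n)).

Definition supp_bounded X N := forall v, 0 < dim X v -> size (val v) <= N.

Lemma fin_dim_bounded X : fin_dim X -> exists N, supp_bounded X N.
Proof.
move=> [L hL]; exists (\max_(v <- L) size (val v)) => v hv.
apply: (@leq_bigmax_seq _ L xpredT (fun v => size (val v))) => //.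
by apply: contraTT hv => /hL ->.
Qed.

Lemma supp_bounded_sigma X N : supp_bounded X N -> supp_bounded (sigma X) N.+1.
Proof.
move=> hb v hv; case: (boolP (sinkb X v)) => hs.
  have := leq_trans hv (dim_sigma_sink_le hs).
  rewrite lt0n sum_nat_eq0 => /forallPn[j]; rewrite -lt0n => /hb.
  by case: (size_nb v j) => ->; lia.
by move: hv; rewrite dim_sigma_source // => /hb; lia.
Qed.

Lemma tpath_size_le X N t : supp_bounded X N -> tpath X t -> size t <= N + N + 1.
Proof.
case: t => [|x s] //= hb /and3P[hp /andP[hx hall] hnb].
have := nobt_path_size hp hnb; have := hb x hx.
have : size (val (last x s)) <= N.
  have hall' : all (supp X) (x :: s) by rewrite /= hx.
  by apply: hb; move: (mem_last x s); apply: (allP hall').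
lia.
Qed.

Lemma diam_path_exists X N : supp_bounded X N -> nonzero X -> exists s, diam_path X s.
Proof.
move=> hb [v hv].
have h0 : exists t, tpath X t /\ size t = 1 by exists [:: v]; rewrite /tpath /= /supp hv.
have hB k : (exists t, tpath X t /\ size t = k) -> k <= N + N + 1.
  by move=> [t [ht <-]]; exact: tpath_size_le hb ht.
have [m [[t [ht <-]] hm]] := ex_maxn_prop h0 hB.
by exists t; split => // t' ht'; apply: hm; exists t'.
Qed.

Lemma supp_sigma_source X v : ~~ sinkb X v -> supp (sigma X) v = supp X v.
Proof. by move=> h; rewrite /supp dim_sigma_source. Qed.

(* Vertices of the walk alternate between sources and sinks of X; the sources
   keep their spaces, and a sink between two vertices of T(X) is in T(X) by
   connectivity of the support. *)
Lemma sigma_path_in_supp X x s : indecomposable X -> path (@adj n) x s -> nobt (x :: s) ->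
  all (supp (sigma X)) (x :: s) -> ~~ sinkb X x -> ~~ sinkb X (last x s) ->
  all (supp X) (x :: s).
Proof.
move=> hX; have [k] := ubnP (size s); elim: k s x => // k IH s x /ltnSE hk.
case: s hk => [|c [|w s]] hk /=.
- by rewrite !andbT => _ _ hx hs _; rewrite -supp_sigma_source.
- by move=> /andP[/adjP[j ->] _] _ _ hx; rewrite sinkb_nb hx.
move=> /and3P[/adjP[j1 ec] /adjP[j2 ew] hp] /andP[xw hnb] /and4P[hx hc hw hall] hxs hl.
have hws : ~~ sinkb X w by rewrite ew !sinkb_nb ec sinkb_nb hxs.
have := IH s w _ hp (nobt_behead (x := c) (s := w :: s) hnb) _ hws hl.
rewrite /= -(supp_sigma_source hxs) hx /=.
have hk' : size s < k by move: hk => /=; lia.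
move=> /(_ hk' (introT andP (conj hw hall))) /andP[hwX hallX].
rewrite hwX hallX !andbT /supp lt0n; apply/negP => /eqP hc0.
have ex : x = nb c j1 by rewrite ec nbK.
have hj : j1 != j2 by apply: contra xw => /eqP E; rewrite ex ew E.
case: (supp_connected hX hc0 hj); rewrite -?ex -?ew => h0.
- by move: hx; rewrite (supp_sigma_source hxs) /supp h0.
- by move: hwX; rewrite /supp h0.
Qed.

Lemma sigma_diam_path1_eq0 Y h : indecomposable Y -> diam_path Y [:: h] -> sinkb Y h ->
  forall v, dim (sigma Y) v = 0.
Proof.
move=> hY [htp hd] hs; apply: dim_sigma_eq0 => v hv.
have hh : 0 < dim Y h by case/and3P: htp => _ /andP[].
apply: (supp_isolated hY hh) => [u j hu|]; last by apply: contraNneq hv => ->.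
apply/eqP; rewrite -leqn0 leqNgt; apply/negP => hv'.
by have := hd [:: u; nb u j]; rewrite /tpath /= adj_nb /supp hu hv' /= => /(_ isT).
Qed.

Lemma sink_diam_path_size X s : indecomposable X -> nonzero (sigma X) ->
  diam_path X s -> sinkb X (head (root n) s) -> sinkb X (last (root n) s) ->
  odd (size s) /\ 3 <= size s.
Proof.
move=> hX hnz hs; case: s hs => [[]//|x s] hs /= hsx.
have /and3P[hpath _ _] := proj1 hs.
rewrite (sinkb_last X hpath) hsx /= => hev.
split; first by rewrite /= hev.
case: s hev hs {hpath} => [_ hs|y [|z s]] //.
by case: hnz => v; rewrite (sigma_diam_path1_eq0 hX hs hsx).
Qed.

Lemma exists_nb_neq (hn : 1 < n) v w : exists j, nb v j != w.
Proof.
pose j0 : 'I_n := Ordinal (ltn_trans (ltnSn 0) hn).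
case: (eqVneq (nb v j0) w) => [<-|]; last by exists j0.
by exists (Ordinal hn); apply/negP => /eqP /nb_inj.
Qed.

Lemma sigma_even_diam_path X : nonzero (sigma X) -> (exists N, supp_bounded X N) ->
  ~ flow_module (sigma X) -> ~ source_module (sigma X) ->
  exists h P, [/\ diam_path (sigma X) (h :: P), odd (size (h :: P)),
                  ~~ sinkb X h & ~~ sinkb X (last h P)].
Proof.
move=> hnz [N hb] hfl hsr.
have [s0 hs0] := diam_path_exists (supp_bounded_sigma hb) hnz.
have [[|h P] [hP hsk]] : exists P, diam_path (sigma X) P /\
    (sinkb (sigma X) (head (root n) P) || sinkb (sigma X) (last (root n) P)).
- apply: NNPP => hne; apply: hsr; split; first by exists s0.
  by move=> P hP; split; apply/negP => hk; apply: hne; exists P; rewrite hk ?orbT.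
- by case: hP.
have hev : ~~ odd (size P) by apply/negP => ho; apply: hfl; exists (h :: P).
have /and3P[hpath _ _] := proj1 hP.
have hpar := sinkb_last (sigma X) hpath; rewrite (negbTE hev) addbF in hpar.
move: hsk; rewrite /= hpar orbb => hhY.
by exists h, P; split; rewrite //= ?hev // -sinkb_sigma ?hpar.
Qed.

(* If the path had the length of a diameter of X, prolonging it by a vertex c
   outside T(X) would give a longer path of T(sigma X): c is a sink of X, so
   (sigma X)_c is the whole sum of the neighbouring spaces. *)
Lemma sigma_diam_path_ltn X h P sX : 1 < n ->
  diam_path (sigma X) (h :: P) -> tpath X (h :: P) -> ~~ sinkb X h ->
  diam_path X sX -> size (h :: P) < size sX.
Proof.
move=> hn [htpY hmaxY] htpX hhX [_ hmaxX].
rewrite ltn_neqAle hmaxX // andbT; apply/eqP => E.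
have /and3P[hpath hallX hnb] := htpX.
have /and3P[_ hallY _] := htpY.
have [j hj] := exists_nb_neq hn h (head h P); set c := nb h j.
have hnbc : nobt [:: c, h & P] by apply: nobt_cons.
have hpc : path (@adj n) c (h :: P) by rewrite /= hpath andbT; apply/adjP; exists j; rewrite nbK.
have hc0 : dim X c = 0.
  apply/eqP; rewrite -leqn0 leqNgt; apply/negP => hc.
  have : tpath X [:: c, h & P].
    by rewrite /tpath hpc hnbc andbT; apply/andP; split => //; apply/andP.
  by move/hmaxX; rewrite -E /= ltnn.
have hcY : 0 < dim (sigma X) c.
  apply: leq_trans (dim_sigma_sink_ge _) => /=; last by rewrite sinkb_nb hhX.
  rewrite hc0 subn0 lt0n sum_nat_eq0; apply/forallPn; exists j.
  by rewrite -lt0n /c nbK; case/andP: hallX.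
have : tpath (sigma X) [:: c, h & P].
  by rewrite /tpath hpc hnbc andbT; apply/andP; split => //; apply/andP.
by move/hmaxY; rewrite /= ltnn.
Qed.

Lemma sigma_diameter_shrinks X sX : 1 < n -> indecomposable X -> indecomposable (sigma X) ->
  nonzero (sigma (sigma X)) -> (exists N, supp_bounded X N) ->
  diam_path X sX -> odd (size sX) ->
  ~ flow_module (sigma X) -> ~ source_module (sigma X) ->
  exists P, [/\ diam_path (sigma X) P, odd (size P), 3 <= size P & size P + 2 <= size sX].
Proof.
move=> hn hX hY hYY hb hsX hoX hfl hsr.
have [h [P [hP hoP hhX hlX]]] := sigma_even_diam_path (proj1 hY) hb hfl hsr.
have /and3P[hpath hallY hnb] := proj1 hP.
have htpX : tpath X (h :: P).
  by rewrite /tpath hpath hnb (sigma_path_in_supp hX hpath hnb hallY hhX hlX).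
have hlt := sigma_diam_path_ltn hn hP htpX hhX hsX.
exists (h :: P); split => //; last by move: hoP hoX hlt; lia.
have hhY : sinkb (sigma X) h by rewrite sinkb_sigma.
have hlY : sinkb (sigma X) (last h P).
  by rewrite (sinkb_last _ hpath) hhY; move: hoP => /= ->.
by have [] := sink_diam_path_size hY hYY hP hhY hlY.
Qed.

End Diameter.

Section Iteration.
Variables (F : fieldType) (n : nat) (M : rep F n).
Hypotheses (hM : indecomposable M) (hreg : regular M).

Lemma iter_sigma_nonzero k : nonzero (iter k (@sigma F n) M).
Proof. by case: (hreg k). Qed.

Lemma iter_sigma_indecomposable k : indecomposable (iter k (@sigma F n) M).
Proof.
elim: k => [//|k IH].
have hnz := iter_sigma_nonzero k.+1.
exact: sigma_indecomposable IH hnz (in_mx_row_full IH hnz).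
Qed.

Lemma iter_sigma_bounded k : fin_dim M -> exists N, supp_bounded (iter k (@sigma F n) M) N.
Proof.
move/fin_dim_bounded => [N hN]; exists (N + k).
by elim: k => [|k IH]; rewrite ?addn0 ?addnS //; exact: supp_bounded_sigma.
Qed.

Lemma iter_sigma_diameter_shrinks s r : 1 < n -> fin_dim M ->
  diam_path M s -> odd (size s) -> 3 <= size s ->
  (forall i, 0 < i <= r ->
     ~ flow_module (iter i (@sigma F n) M) /\ ~ source_module (iter i (@sigma F n) M)) ->
  exists P, [/\ diam_path (iter r (@sigma F n) M) P, odd (size P), 3 <= size P &
                size P + r.*2 <= size s].
Proof.
move=> hn hfin hs hodd hs3; elim: r => [_|r IH hno]; first by exists s; rewrite addn0.
have [|P [hP hoP _ hPs]] := IH.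
  by move=> i /andP[hi1 hir]; apply: hno; rewrite hi1 (leqW hir).
have [hfl hsr] := hno r.+1 (leqnn _).
have [P' [hP' hoP' h3P' hP'P]] := sigma_diameter_shrinks hn (iter_sigma_indecomposable r)
  (iter_sigma_indecomposable r.+1) (iter_sigma_nonzero r.+2) (iter_sigma_bounded r hfin)
  hP hoP hfl hsr.
by exists P'; split => //; lia.
Qed.

End Iteration.

Theorem mainTheorem10 (F : fieldType) (n : nat) (hn : (3 <= n)%N)
  (M : rep F n) (s : seq (vertex n)) :
  fin_dim M -> indecomposable M -> regular M -> sink_module M ->
  diam_path M s ->
  let r := ((size s).-1)./2 in
  (1 <= r)%N /\
  exists i : nat, [/\ (1 <= i)%N, (i <= r)%N &
    (flow_module (iter i (@sigma F n) M) \/ source_module (iter i (@sigma F n) M))].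
Proof.
move=> hfin hM hreg [_ hsink] hs r.
have [hsx hsl] := hsink s hs.
have [hodd hs3] := sink_diam_path_size hM (iter_sigma_nonzero hreg 1) hs hsx hsl.
have hr : size s = r.*2.+1 by rewrite /r; lia.
split; first lia.
apply: NNPP => hno.
have [|P [_ _ hP3 hPs]] :=
  iter_sigma_diameter_shrinks hM hreg (ltnW hn) hfin hs hodd hs3 (r := r).
  by move=> i /andP[hi1 hir]; split => h; apply: hno; exists i; split => //; [left|right].
lia.
Qed.
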